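(* For $i\in\{1,2\}$ let $\Psi_i=[A_i,B_i,C_i,D_i]\in\mathcal{RH}_\infty^{m_i\times k_i}$ with $A_1\in\mathbb{R}^{n_1\times n_1}$, $A_2\in\mathbb{R}^{n_2\times n_2}$, and let $M\in\mathbb{R}^{m_1\times m_2}$. Assume $\Psi_1^*(\zeta)M\Psi_2(\zeta)=0$ for all $\zeta\in\partial\mathbb D$, and that $(A_1,B_1)$ and $(A_2,B_2)$ are controllable. Then there exists $Z_{12}\in\mathbb{R}^{n_1\times n_2}$ such that $$\begin{pmatrix}A_1^\top Z_{12}A_2-Z_{12} & A_1^\top Z_{12}B_2\\ B_1^\top Z_{12}A_2 & B_1^\top Z_{12}B_2\end{pmatrix}=\begin{pmatrix}C_1&D_1\end{pmatrix}^\top M\begin{pmatrix}C_2&D_2\end{pmatrix}.$$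
   Context: $[A,B,C,D](\zeta)=C(\zeta I-A)^{-1}B+D$. $\mathcal{RH}_\infty$ here means the realization matrix $A$ has all eigenvalues in the open unit disc $\mathbb D$. $\Psi^*(\zeta)=\Psi(\zeta^{-1})^\top$; $\partial\mathbb D$ is the unit circle. *)

From HB Require Import structures.
From mathcomp Require Import all_boot all_order all_algebra.
From mathcomp Require Import reals.
From mathcomp Require Import complex.
Set Implicit Arguments. Unset Strict Implicit. Unset Printing Implicit Defensive.
Import Order.TTheory GRing.Theory Num.Theory.
Local Open Scope ring_scope.
Local Open Scope complex_scope.

Section Defs.
Variable R : realType.

Definition cmx (m n : nat) (A : 'M[R]_(m, n)) : 'M[R[i]]_(m, n) :=
  map_mx (fun x : R => x%:C) A.

(* Transfer function [A,B,C,D](z) = C (z I - A)^{-1} B + D *)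
Definition tf (n m k : nat) (A : 'M[R]_n) (B : 'M[R]_(n, k))
    (C : 'M[R]_(m, n)) (D : 'M[R]_(m, k)) (z : R[i]) : 'M[R[i]]_(m, k) :=
  cmx C *m invmx (z%:M - cmx A) *m cmx B + cmx D.

(* Para-Hermitian conjugate Psi^*(z) = Psi(z^{-1})^T *)
Definition tf_star (n m k : nat) (A : 'M[R]_n) (B : 'M[R]_(n, k))
    (C : 'M[R]_(m, n)) (D : 'M[R]_(m, k)) (z : R[i]) : 'M[R[i]]_(k, m) :=
  (tf A B C D z^-1)^T.

Definition schur_stable (n : nat) (A : 'M[R]_n) : Prop :=
  forall l : R[i], root (char_poly (cmx A)) l -> `|l| < 1.

Definition controllable (n k : nat) (A : 'M[R]_n) (B : 'M[R]_(n, k)) : Prop :=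
  \rank (\mxrow_(j < n) (A ^+ j *m B)) = n.
End Defs.

From HB Require Import structures.
From mathcomp Require Import all_boot all_order all_algebra.
From mathcomp Require Import reals complex.
From mathcomp Require Import ring.
Set Implicit Arguments. Unset Strict Implicit. Unset Printing Implicit Defensive.
Import Order.TTheory GRing.Theory Num.Theory.
Local Open Scope ring_scope.

(* Stability makes the Stein map Z |-> A1^T Z A2 - Z injective, hence onto; take Z
   with A1^T Z A2 - Z = C1^T M C2.  The resolvent identities then turn
   Psi1^*(z) M Psi2(z) into K + B1^T (z^-1 - A1^T)^-1 N1 + N2 (z - A2)^-1 B2, where
   K, N1, N2 are the defects of the three other blocks.  The middle term has its
   poles outside the closed disc and the last one inside, so after clearing
   denominators the coprimality of char A2 and det (1 - z A1^T) shows that the sum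
   vanishes on the unit circle only if K = 0 and all the Markov parameters
   B1^T (A1^T)^j N1 and N2 A2^j B2 vanish.  Controllability then forces N1 = N2 = 0.
   Injectivity of the Stein map is the special case K = -Z of the same argument. *)

(** * Polynomial matrices *)

Notation polyC_mx M := (map_mx (@polyC _) M).

(* Its determinant is the reversal ['X^n (char_poly T)(1/'X)] of [char_poly T]. *)
Definition rev_char_poly_mx (F : comNzRingType) n (T : 'M[F]_n) : 'M[{poly F}]_n :=
  1%:M - 'X *: polyC_mx T.

Section PolyMatrix.
Variable F : comNzRingType.

Lemma size_det_le (n : nat) (M : 'M[{poly F}]_n) :
  (forall i j, size (M i j) <= 2)%N -> (size (\det M) <= n.+1)%N.
Proof.
move=> M_le2; rewrite /determinant.
apply: leq_trans (size_sum _ _ _) _; apply/bigmax_leqP => s _.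
rewrite size_Msign -[n in (_ <= n.+1)%N]card_ord -sum1_card.
apply: (big_ind2 (fun (p : {poly F}) (k : nat) => size p <= k.+1)%N) => [|p k q l|i _].
- by rewrite size_poly1.
- move=> Hp Hq; apply: leq_trans (size_polyMleq _ _) _.
  by rewrite -subn1 -addnS leq_subLR addnA leq_add.
- exact: M_le2.
Qed.

Lemma size_char_poly_mx_le (n : nat) (A : 'M[F]_n) i j :
  (size (char_poly_mx A i j) <= 2)%N.
Proof.
rewrite !mxE; case: (i == j) => /=; first by rewrite mulr1n size_XsubC.
by rewrite mulr0n sub0r size_polyN size_polyC; case: (_ != 0).
Qed.

Lemma size_adj_char_poly_mx (n : nat) (A : 'M[F]_n) i j :
  (size (\adj (char_poly_mx A) i j) <= n)%N.
Proof.
rewrite !mxE /cofactor size_Msign.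
have n_gt0 : (0 < n)%N := leq_ltn_trans (leq0n i) (ltn_ord i).
apply: leq_trans (size_det_le _) _; last by rewrite prednK.
by move=> a b; have := size_char_poly_mx_le A (lift j a) (lift i b); rewrite !mxE.
Qed.

Lemma size_polyC_mx_adj_char_poly_mx n p q (A : 'M[F]_n) (U : 'M[F]_(p, n))
    (V : 'M[F]_(n, q)) i j :
  (size ((polyC_mx U *m \adj (char_poly_mx A) *m polyC_mx V) i j) <= n)%N.
Proof.
rewrite mxE; apply: leq_trans (size_sum _ _ _) _; apply/bigmax_leqP => l _.
rewrite [polyC_mx V _ _]mxE mulrC mul_polyC; apply: leq_trans (size_scale_leq _ _) _.
rewrite mxE; apply: leq_trans (size_sum _ _ _) _; apply/bigmax_leqP => k _.
rewrite [polyC_mx U _ _]mxE mul_polyC; apply: leq_trans (size_scale_leq _ _) _.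
exact: size_adj_char_poly_mx.
Qed.

Lemma horner_eval_polyC_mx m n (z : F) (M : 'M[F]_(m, n)) :
  map_mx (horner_eval z) (polyC_mx M) = M.
Proof. by apply/matrixP => i j; rewrite !mxE /= horner_evalE hornerC. Qed.

Lemma horner_eval_char_poly_mx n (z : F) (A : 'M[F]_n) :
  map_mx (horner_eval z) (char_poly_mx A) = z%:M - A.
Proof.
apply/matrixP => i j; rewrite !mxE /= horner_evalE.
by rewrite hornerD hornerN hornerMn hornerX hornerC.
Qed.

Lemma horner_eval_rev_char_poly_mx n (z : F) (T : 'M[F]_n) :
  map_mx (horner_eval z) (rev_char_poly_mx T) = 1%:M - z *: T.
Proof.
apply/matrixP => i j; rewrite !mxE /= horner_evalE.
by rewrite hornerD hornerN hornerMn hornerC mulrC hornerMX hornerC mulrC.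
Qed.

Lemma horner_char_poly n (z : F) (A : 'M[F]_n) :
  (char_poly A).[z] = \det (z%:M - A).
Proof. by rewrite -horner_evalE -det_map_mx horner_eval_char_poly_mx. Qed.

Lemma horner_det_rev_char_poly_mx n (z : F) (T : 'M[F]_n) :
  (\det (rev_char_poly_mx T)).[z] = \det (1%:M - z *: T).
Proof. by rewrite -horner_evalE -det_map_mx horner_eval_rev_char_poly_mx. Qed.

Lemma det_rev_char_poly_mx0 n (T : 'M[F]_n) : (\det (rev_char_poly_mx T)).[0] = 1.
Proof. by rewrite horner_det_rev_char_poly_mx scale0r subr0 det1. Qed.

Lemma char_poly_trmx n (A : 'M[F]_n) : char_poly A^T = char_poly A.
Proof.
rewrite /char_poly -det_tr; congr (\det _).
by apply/matrixP => i j; rewrite !mxE eq_sym.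
Qed.

End PolyMatrix.

Lemma root_det_rev_char_poly_mx (F : fieldType) n (T : 'M[F]_n) x :
  root (\det (rev_char_poly_mx T)) x -> x != 0 /\ root (char_poly T) x^-1.
Proof.
move=> /rootP det0; have x_neq0 : x != 0.
  by apply: contra_eqN det0 => /eqP ->; rewrite det_rev_char_poly_mx0 oner_eq0.
split => //; apply/rootP; rewrite horner_char_poly.
move: det0; rewrite horner_det_rev_char_poly_mx.
have -> : 1%:M - x *: T = x *: (x^-1%:M - T).
  by rewrite scalerBr scale_scalar_mx mulfV.
by rewrite detZ => /eqP; rewrite mulf_eq0 expf_eq0 (negPf x_neq0) andbF => /eqP.
Qed.

(** * Spectra in the unit disc *)

Definition spectrum_in_disc (C : numClosedFieldType) n (A : 'M[C]_n) :=
  forall l : C, root (char_poly A) l -> `|l| < 1.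

Section UnitDisc.
Variable C : numClosedFieldType.

Lemma spectrum_in_disc_trmx n (A : 'M[C]_n) :
  spectrum_in_disc A -> spectrum_in_disc A^T.
Proof. by move=> sA l; rewrite char_poly_trmx; apply: sA. Qed.

Lemma char_poly_unit_circle_neq0 n (A : 'M[C]_n) (z : C) :
  spectrum_in_disc A -> `|z| = 1 -> (char_poly A).[z] != 0.
Proof. by move=> sA z1; apply/negP => /eqP/rootP/sA; rewrite z1 ltxx. Qed.

Lemma unitmx_sub_unit_circle n (A : 'M[C]_n) (z : C) :
  spectrum_in_disc A -> `|z| = 1 -> (z%:M - A) \in unitmx.
Proof.
by move=> sA z1; rewrite unitmxE -horner_char_poly unitfE char_poly_unit_circle_neq0.
Qed.

Lemma det_rev_char_poly_mx_unit_circle_neq0 n (T : 'M[C]_n) (z : C) :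
  spectrum_in_disc T -> `|z| = 1 -> (\det (rev_char_poly_mx T)).[z] != 0.
Proof.
move=> sT z1; apply/negP => /eqP/rootP/root_det_rev_char_poly_mx [_ /sT].
by rewrite normfV z1 invr1 ltxx.
Qed.

Lemma coprimep_char_poly_det_rev n1 n2 (T : 'M[C]_n1) (A : 'M[C]_n2) :
  spectrum_in_disc T -> spectrum_in_disc A ->
  coprimep (char_poly A) (\det (rev_char_poly_mx T)).
Proof.
move=> sT sA; apply: Pdiv.ClosedField.root_coprimep => x /sA x_lt1.
apply/negP => /root_det_rev_char_poly_mx [x_neq0 /sT xV_lt1].
have : `|x| * `|x^-1| < 1 by apply: mulr_ilt1.
by rewrite -normrM mulfV // normr1 ltxx.
Qed.

(* The points [(t + i) / (t - i)], [t : nat], are distinct and lie on the circle. *)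
Lemma poly_unit_circle_eq0 (p : {poly C}) :
  (forall z : C, `|z| = 1 -> p.[z] = 0) -> p = 0.
Proof.
move=> p_circle; apply/eqP; apply/negPn/negP => p_neq0.
pose u (t : nat) : C := t%:R + 'i.
have u_conj t : (u t)^* = t%:R - 'i by rewrite /u rmorphD /= conjC_nat conjCi.
have u_norm t : u t * (u t)^* = (t ^ 2).+1%:R.
  rewrite u_conj /u.
  have -> : (t%:R + 'i) * (t%:R - 'i) = t%:R ^+ 2 - 'i ^+ 2 :> C by ring.
  by rewrite sqrCi opprK -natrX -natr1.
have uc_neq0 t : (u t)^* != 0.
  apply: contraTneq isT => uc0; have := u_norm t.
  by rewrite uc0 mulr0 => /esym/eqP; rewrite pnatr_eq0.
have u_neq0 t : u t != 0 by rewrite -conjC_eq0.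
pose z (t : nat) : C := u t / (u t)^*.
have z_norm t : `|z t| = 1.
  by rewrite /z normrM normrV ?unitfE // norm_conjC mulfV // normr_eq0.
have z_inj : injective z.
  move=> s t e.
  have : u s * (u t)^* = u t * (u s)^*.
    have := congr1 (fun w => w * (u s)^* * (u t)^*) e.
    by rewrite /z divfK // mulrAC divfK // mulrC.
  rewrite !u_conj /u => /eqP; rewrite -subr_eq0.
  have -> : (s%:R + 'i) * (t%:R - 'i) - (t%:R + 'i) * (s%:R - 'i) =
    2%:R * 'i * (t%:R - s%:R) :> C by ring.
  by rewrite !mulf_eq0 pnatr_eq0 /= (negPf (neq0Ci C)) /= subr_eq0 eqr_nat => /eqP.
pose rs := [seq z t | t <- iota 0 (size p)].
have rs_roots : all (root p) rs.
  by apply/allP => w /mapP [t _ ->]; apply/rootP; apply: p_circle.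
have rs_uniq : uniq rs by rewrite map_inj_uniq // iota_uniq.
by have := max_poly_roots p_neq0 rs_roots rs_uniq; rewrite size_map size_iota ltnn.
Qed.

Lemma poly_mx_unit_circle_eq0 m n (Q : 'M[{poly C}]_(m, n)) :
  (forall z : C, `|z| = 1 -> map_mx (horner_eval z) Q = 0) -> Q = 0.
Proof.
move=> Q_circle; apply/matrixP => i j; rewrite [RHS]mxE.
apply: poly_unit_circle_eq0 => z z1.
by have := congr1 (fun M : 'M[C]_(m, n) => M i j) (Q_circle z z1); rewrite !mxE.
Qed.

End UnitDisc.

Section PolyMatrixCancel.
Variable F : idomainType.

Lemma coprimep_scalemx_eq0 n p q (a b : {poly F}) (E G : 'M[{poly F}]_(p, q)) :
  size a = n.+1 -> coprimep a b -> (forall i j, size (E i j) <= n)%N ->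
  b *: E = a *: G -> E = 0.
Proof.
move=> size_a cop_ab size_E bE_aG; apply/matrixP => i j; rewrite mxE.
have := congr1 (fun M : 'M[{poly F}]_(p, q) => M i j) bE_aG; rewrite !mxE => e.
apply/eqP; apply: contraT => E_neq0.
have : a %| E i j by rewrite -(Gauss_dvdpr _ cop_ab) e dvdp_mulIl.
by move/(dvdp_leq E_neq0); rewrite size_a => /leq_trans/(_ (size_E i j)); rewrite ltnn.
Qed.

Lemma scalemx_polyC_mx_eq0 n p q (a : {poly F}) (W : 'M[F]_(p, q)) :
  size a = n.+1 -> (forall i j, size ((a *: polyC_mx W) i j) <= n)%N -> W = 0.
Proof.
move=> size_a size_aW; apply/matrixP => i j; rewrite mxE.
apply/eqP; apply: contraT => W_neq0.
by have := size_aW i j; rewrite !mxE mulrC mul_polyC size_scale // size_a ltnn.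
Qed.

(* [char_poly_mx A] and [rev_char_poly_mx A] both have the shape of [M]; the
   identity [adj M * M = det M] links [N A^j B] to [Y j] and [Y j.+1]. *)
Section AdjointPowers.
Variables (n p q : nat) (M : 'M[{poly F}]_n) (alpha beta : {poly F}).
Variables (A : 'M[F]_n) (N : 'M[F]_(p, n)) (B : 'M[F]_(n, q)).
Hypothesis defM : M = alpha%:M - beta *: polyC_mx A.

Let Y j := polyC_mx N *m \adj M *m polyC_mx (A ^+ j *m B).

Lemma adj_powers_step j :
  Y j = 0 -> \det M *: polyC_mx (N *m A ^+ j *m B) = - (beta *: Y j.+1).
Proof.
rewrite /Y => Yj0.
have -> : \det M *: polyC_mx (N *m A ^+ j *m B) =
          polyC_mx N *m \adj M *m M *m polyC_mx (A ^+ j *m B).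
  by rewrite -(mulmxA (polyC_mx N)) mul_adj_mx mul_mx_scalar -scalemxAl -map_mxM mulmxA.
rewrite {2}defM mulmxBr mulmxBl mul_mx_scalar -scalemxAl Yj0 scaler0 sub0r.
by rewrite -scalemxAr -scalemxAl -(mulmxA _ (polyC_mx A)) -map_mxM mulmxA exprS mulmxE.
Qed.

Lemma adj_powers_eq0 : beta != 0 ->
  (forall j W, \det M *: polyC_mx W = - (beta *: Y j.+1) -> W = 0) ->
  Y 0 = 0 -> forall j, N *m A ^+ j *m B = 0.
Proof.
move=> beta_neq0 cancel Y00.
have Y0 j : Y j = 0.
  elim: j => [|j Yj0] //; have := adj_powers_step Yj0.
  rewrite (cancel _ _ (adj_powers_step Yj0)) map_mx0 scaler0 => /esym/eqP.
  by rewrite oppr_eq0 scalemx_eq0 (negPf beta_neq0) => /eqP.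
by move=> j; apply: (cancel j); apply: adj_powers_step.
Qed.

End AdjointPowers.

Lemma adj_char_poly_mx_powers_eq0 n p q (A : 'M[F]_n)
    (N : 'M[F]_(p, n)) (B : 'M[F]_(n, q)) :
  polyC_mx N *m \adj (char_poly_mx A) *m polyC_mx B = 0 ->
  forall j, N *m A ^+ j *m B = 0.
Proof.
move=> NB0; apply: (@adj_powers_eq0 _ _ _ _ 'X 1) => [||j W|].
- by rewrite scale1r.
- exact: oner_neq0.
- rewrite scale1r => e; apply: (scalemx_polyC_mx_eq0 (size_char_poly A)) => i k.
  by rewrite (e : char_poly A *: _ = _) mxE size_polyN size_polyC_mx_adj_char_poly_mx.
- by rewrite expr0 mul1mx.
Qed.

Lemma adj_rev_char_poly_mx_powers_eq0 n p q (T : 'M[F]_n)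
    (G : 'M[F]_(p, n)) (N : 'M[F]_(n, q)) :
  polyC_mx G *m \adj (rev_char_poly_mx T) *m polyC_mx N = 0 ->
  forall j, G *m T ^+ j *m N = 0.
Proof.
move=> GN0; apply: (@adj_powers_eq0 _ _ _ _ 1 'X) => [||j W|] //.
- by rewrite polyX_eq0.
- move/(congr1 (map_mx (horner_eval 0))).
  rewrite map_mxN !map_mxZ horner_eval_polyC_mx /= !horner_evalE.
  by rewrite det_rev_char_poly_mx0 hornerX scale1r scale0r oppr0.
- by rewrite expr0 mul1mx.
Qed.

End PolyMatrixCancel.

(** * Resolvents *)

Lemma invmx_char_poly_mx (F : fieldType) n (A : 'M[F]_n) (z : F) :
  (char_poly A).[z] != 0 ->
  invmx (z%:M - A) =
    ((char_poly A).[z])^-1 *: map_mx (horner_eval z) (\adj (char_poly_mx A)).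
Proof.
move=> Az_neq0; rewrite map_mx_adj horner_eval_char_poly_mx horner_char_poly.
by rewrite /invmx unitmxE unitfE -horner_char_poly Az_neq0.
Qed.

Lemma invmx_rev_char_poly_mx (F : fieldType) n (T : 'M[F]_n) (z : F) :
  z != 0 -> (\det (rev_char_poly_mx T)).[z] != 0 ->
  invmx (z^-1%:M - T) = (z / (\det (rev_char_poly_mx T)).[z]) *:
    map_mx (horner_eval z) (\adj (rev_char_poly_mx T)).
Proof.
move=> z_neq0 Tz_neq0.
rewrite map_mx_adj horner_eval_rev_char_poly_mx horner_det_rev_char_poly_mx.
rewrite horner_det_rev_char_poly_mx in Tz_neq0.
have -> : z^-1%:M - T = z^-1 *: (1%:M - z *: T).
  by rewrite scalerBr scale_scalar_mx mulr1 scalerA mulVf // scale1r.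
have unitT : 1%:M - z *: T \in unitmx by rewrite unitmxE unitfE.
rewrite invmxZ; last by rewrite unitmxZ ?unitfE ?invr_eq0.
by rewrite invrK /invmx unitT scalerA.
Qed.

Section ResolventSum.
Variables (C : numClosedFieldType) (n1 n2 p q : nat).
Variables (T : 'M[C]_n1) (A : 'M[C]_n2) (K : 'M[C]_(p, q)).
Variables (G : 'M[C]_(p, n1)) (N1 : 'M[C]_(n1, q)).
Variables (N2 : 'M[C]_(p, n2)) (B : 'M[C]_(n2, q)).
Hypotheses (sT : spectrum_in_disc T) (sA : spectrum_in_disc A).

Let a := char_poly A.
Let b := \det (rev_char_poly_mx T).
Let Gp := polyC_mx G *m \adj (rev_char_poly_mx T) *m polyC_mx N1.
Let Ep := polyC_mx N2 *m \adj (char_poly_mx A) *m polyC_mx B.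

Lemma resolvent_sum_numerator_unit_circle :
  (forall z : C, `|z| = 1 ->
     K + G *m invmx (z^-1%:M - T) *m N1 + N2 *m invmx (z%:M - A) *m B = 0) ->
  (a * b) *: polyC_mx K + ('X * a) *: Gp + b *: Ep = 0.
Proof.
move=> sum0; apply: poly_mx_unit_circle_eq0 => z z1.
have z_neq0 : z != 0 by rewrite -normr_eq0 z1 oner_eq0.
have az_neq0 : a.[z] != 0 by apply: char_poly_unit_circle_neq0.
have bz_neq0 : b.[z] != 0 by apply: det_rev_char_poly_mx_unit_circle_neq0.
have := congr1 (fun X => (a.[z] * b.[z]) *: X) (sum0 z z1).
rewrite /= scaler0 (invmx_char_poly_mx az_neq0) (invmx_rev_char_poly_mx z_neq0 bz_neq0).
rewrite -!scalemxAr -!scalemxAl !scalerDr !scalerA.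
have -> : a.[z] * b.[z] * (z / b.[z]) = z * a.[z] by field.
have -> : a.[z] * b.[z] * a.[z]^-1 = b.[z] by field.
move=> <-; rewrite /Gp /Ep !map_mxD !map_mxZ !map_mxM.
by rewrite !horner_eval_polyC_mx /= !horner_evalE !hornerE.
Qed.

(* After clearing denominators, [a] divides [b *: Ep]; as [a] is coprime to [b] and
   longer than the entries of [Ep], [Ep = 0]; evaluating the rest at 0 kills [K]. *)
Lemma resolvent_sum_unit_circle_eq0 :
  (forall z : C, `|z| = 1 ->
     K + G *m invmx (z^-1%:M - T) *m N1 + N2 *m invmx (z%:M - A) *m B = 0) ->
  [/\ K = 0, forall j, G *m T ^+ j *m N1 = 0 & forall j, N2 *m A ^+ j *m B = 0].
Proof.
move=> /resolvent_sum_numerator_unit_circle Q0.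
have E2 : b *: Ep = a *: (- (b *: polyC_mx K + 'X *: Gp)).
  apply/eqP; move: Q0; rewrite addrC => /eqP; rewrite addr_eq0 => /eqP ->.
  by rewrite scalerN scalerDr !scalerA [_ * 'X]mulrC.
have Ep0 : Ep = 0.
  apply: (coprimep_scalemx_eq0 (size_char_poly A) (coprimep_char_poly_det_rev sT sA) _ E2).
  exact: size_polyC_mx_adj_char_poly_mx.
have KG0 : b *: polyC_mx K + 'X *: Gp = 0.
  move: E2; rewrite Ep0 scaler0 => /eqP; rewrite eq_sym scalemx_eq0.
  by rewrite -size_poly_eq0 size_char_poly oppr_eq0 => /eqP.
have K0 : K = 0.
  have := congr1 (map_mx (horner_eval 0)) KG0.
  rewrite map_mxD !map_mxZ horner_eval_polyC_mx /= !horner_evalE.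
  by rewrite det_rev_char_poly_mx0 hornerX scale1r scale0r addr0 map_mx0.
have Gp0 : Gp = 0.
  move: KG0; rewrite K0 map_mx0 scaler0 add0r => /eqP.
  by rewrite scalemx_eq0 polyX_eq0 => /eqP.
split => //; [exact: adj_rev_char_poly_mx_powers_eq0 | exact: adj_char_poly_mx_powers_eq0].
Qed.

End ResolventSum.

(** * The Stein equation *)

Definition stein_map (F : fieldType) n1 n2 (T : 'M[F]_n1) (A : 'M[F]_n2)
    (Z : 'M[F]_(n1, n2)) : 'M[F]_(n1, n2) :=
  T *m Z *m A - Z.

Section Stein.
Variables (F : fieldType) (n1 n2 : nat) (T : 'M[F]_n1) (A : 'M[F]_n2).

Lemma stein_map_is_linear : linear (stein_map T A).
Proof.
move=> c X Y; rewrite /stein_map mulmxDr mulmxDl -scalemxAr -scalemxAl.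
by rewrite scalerBr addrACA opprD.
Qed.

HB.instance Definition _ :=
  GRing.isLinear.Build F 'M[F]_(n1, n2) 'M[F]_(n1, n2) _ (stein_map T A)
    stein_map_is_linear.

Lemma stein_map_surjective :
  (forall Z, stein_map T A Z = 0 -> Z = 0) ->
  forall Y, exists Z, stein_map T A Z = Y.
Proof.
move=> stein_inj Y; pose L := lin_mx (stein_map T A).
have L_unit : L \in unitmx.
  rewrite -row_free_unit -kermx_eq0; apply/rowV0P => v /sub_kermxP vL0.
  have : stein_map T A (vec_mx v) = 0.
    by apply: (can_inj mxvecK); rewrite -mul_vec_lin vec_mxK vL0 linear0.
  by move/stein_inj/eqP; rewrite vec_mx_eq0 => /eqP.
exists (vec_mx (mxvec Y *m invmx L)); apply: (can_inj mxvecK).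
by rewrite -mul_vec_lin vec_mxK mulmxKV.
Qed.

(* [S] and [R] play the roles of [(w - T)^-1] and [(z - A)^-1], with [w = z^-1]. *)
Variables (S : 'M[F]_n1) (R : 'M[F]_n2) (w z : F).
Hypotheses (wz1 : w * z = 1)
  (ST : S *m T = w *: S - 1%:M) (AR : A *m R = z *: R - 1%:M).

Lemma stein_map_resolvents Z :
  S *m stein_map T A Z *m R = - Z - S *m T *m Z - Z *m A *m R.
Proof.
rewrite /stein_map mulmxBr mulmxBl !mulmxA ST -!(mulmxA _ A R) AR.
rewrite !mulmxBl !mulmxBr -!scalemxAl -!scalemxAr !scalerA wz1 scale1r.
rewrite !mul1mx !mulmx1.
move: (S *m Z *m R) (w *: (S *m Z)) (z *: (Z *m R)) => SZR SZ ZR.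
by apply/matrixP => i j; rewrite !mxE; ring.
Qed.

Lemma stein_product_resolvents m k1 k2 (U : 'M[F]_(k1, n1)) (V : 'M[F]_(n1, m))
    (E : 'M[F]_(k1, m)) (C : 'M[F]_(m, n2)) (B : 'M[F]_(n2, k2))
    (D : 'M[F]_(m, k2)) (Z : 'M[F]_(n1, n2)) :
  stein_map T A Z = V *m C ->
  (U *m S *m V + E) *m (C *m R *m B + D) =
  (E *m D - U *m Z *m B) + U *m S *m (V *m D - T *m Z *m B)
    + (E *m C - U *m Z *m A) *m R *m B.
Proof.
move=> steinZ; rewrite mulmxDr !mulmxDl.
have -> : U *m S *m V *m (C *m R *m B) = U *m (S *m (V *m C) *m R) *m B.
  by rewrite !mulmxA.
rewrite -steinZ stein_map_resolvents !mulmxBr !mulmxBl !mulmxN !mulNmx !mulmxA.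
move: (U *m Z *m B) (U *m S *m T *m Z *m B) (U *m Z *m A *m R *m B)
  (U *m S *m V *m D) (E *m C *m R *m B) (E *m D) => X1 X2 X3 X4 X5 X6.
by apply/matrixP => i j; rewrite !mxE; ring.
Qed.

End Stein.

Lemma invmx_sub_scalar_mulmx (F : fieldType) n (A : 'M[F]_n) (z : F) :
  (z%:M - A) \in unitmx -> invmx (z%:M - A) *m A = z *: invmx (z%:M - A) - 1%:M.
Proof. by move/mulVmx; rewrite mulmxBr mul_mx_scalar => <-; rewrite subKr. Qed.

Lemma mulmx_invmx_sub_scalar (F : fieldType) n (A : 'M[F]_n) (z : F) :
  (z%:M - A) \in unitmx -> A *m invmx (z%:M - A) = z *: invmx (z%:M - A) - 1%:M.
Proof. by move/mulmxV; rewrite mulmxBl mul_scalar_mx => <-; rewrite subKr. Qed.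

(* On the kernel, [stein_map_resolvents] expresses [- Z] as a resolvent sum. *)
Lemma stein_map_stable_eq0 (C : numClosedFieldType) n1 n2 (T : 'M[C]_n1)
    (A : 'M[C]_n2) (Z : 'M[C]_(n1, n2)) :
  spectrum_in_disc T -> spectrum_in_disc A -> stein_map T A Z = 0 -> Z = 0.
Proof.
move=> sT sA steinZ0.
suff circle0 z : `|z| = 1 -> - Z + 1%:M *m invmx (z^-1%:M - T) *m - (T *m Z)
    + - (Z *m A) *m invmx (z%:M - A) *m 1%:M = 0.
  by have [/eqP] := resolvent_sum_unit_circle_eq0 sT sA circle0; rewrite oppr_eq0 => /eqP.
move=> z1; have z_neq0 : z != 0 by rewrite -normr_eq0 z1 oner_eq0.
have zV1 : `|z^-1| = 1 by rewrite normfV z1 invr1.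
have uT := unitmx_sub_unit_circle sT zV1.
have uA := unitmx_sub_unit_circle sA z1.
have := stein_map_resolvents (mulVf z_neq0) (invmx_sub_scalar_mulmx uT)
  (mulmx_invmx_sub_scalar uA) Z.
by rewrite steinZ0 mulmx0 mul0mx mul1mx mulmx1 mulmxN mulNmx !mulmxA => <-.
Qed.

Lemma kalman_full_rank_eq0 (F : fieldType) n k p (A : 'M[F]_n)
    (B : 'M[F]_(n, k)) (N : 'M[F]_(p, n)) :
  \rank (\mxrow_(j < n) (A ^+ j *m B)) = n ->
  (forall j, N *m A ^+ j *m B = 0) -> N = 0.
Proof.
move=> rank_n NAB0; have : row_free (\mxrow_(j < n) (A ^+ j *m B)) by rewrite /row_free rank_n.
move/row_free_inj; apply; rewrite mul0mx mul_mxrow -mxrow0.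
by apply: eq_mxrow => j; rewrite mulmxA NAB0.
Qed.

Lemma map_mx_expr (aR rR : comNzRingType) (f : {rmorphism aR -> rR}) n
    (A : 'M[aR]_n) j :
  map_mx f (A ^+ j) = map_mx f A ^+ j.
Proof.
elim: j => [|j IHj]; first by rewrite !expr0 map_mx1.
by rewrite !exprS -!mulmxE map_mxM IHj.
Qed.

Lemma trmx_expr (F : comNzRingType) n (A : 'M[F]_n) j : (A ^+ j)^T = A^T ^+ j.
Proof.
elim: j => [|j IHj]; first by rewrite !expr0 trmx1.
by rewrite exprS exprSr -!mulmxE trmx_mul IHj.
Qed.

(** * Real systems *)

Section RealToComplex.
Variable R : realType.

Lemma cmx_inj m n : injective (@cmx R m n).
Proof. exact: map_mx_inj. Qed.

Lemma cmx0 m n : cmx (0 : 'M[R]_(m, n)) = 0.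
Proof. exact: map_mx0. Qed.

Lemma cmxB m n (A B : 'M[R]_(m, n)) : cmx (A - B) = cmx A - cmx B.
Proof. exact: map_mxB. Qed.

Lemma cmxM m n p (A : 'M[R]_(m, n)) (B : 'M[R]_(n, p)) :
  cmx (A *m B) = cmx A *m cmx B.
Proof. exact: map_mxM. Qed.

Lemma cmx_tr m n (A : 'M[R]_(m, n)) : cmx A^T = (cmx A)^T.
Proof. by rewrite /cmx map_trmx. Qed.

Lemma cmxX n (A : 'M[R]_n) j : cmx (A ^+ j) = cmx A ^+ j.
Proof. exact: map_mx_expr. Qed.

Lemma cmx_stein_map n1 n2 (T : 'M[R]_n1) (A : 'M[R]_n2) (Z : 'M[R]_(n1, n2)) :
  cmx (stein_map T A Z) = stein_map (cmx T) (cmx A) (cmx Z).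
Proof. by rewrite /stein_map cmxB !cmxM. Qed.

Lemma schur_stable_trmx n (A : 'M[R]_n) : schur_stable A -> schur_stable A^T.
Proof. by rewrite /schur_stable cmx_tr; apply: spectrum_in_disc_trmx. Qed.

Lemma stein_map_schur_surjective n1 n2 (T : 'M[R]_n1) (A : 'M[R]_n2) :
  schur_stable T -> schur_stable A -> forall Y, exists Z, stein_map T A Z = Y.
Proof.
move=> sT sA; apply: stein_map_surjective => Z /(congr1 (@cmx R _ _)).
rewrite cmx_stein_map cmx0 => /(stein_map_stable_eq0 sT sA).
by rewrite -(cmx0 n1 n2) => /cmx_inj.
Qed.

Lemma controllable_eq0 n k p (A : 'M[R]_n) (B : 'M[R]_(n, k)) (N : 'M[R]_(p, n)) :
  controllable A B -> (forall j, cmx N *m cmx A ^+ j *m cmx B = 0) -> N = 0.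
Proof.
move=> cAB NAB0; apply: (kalman_full_rank_eq0 cAB) => j.
by apply: cmx_inj; rewrite cmx0 !cmxM cmxX NAB0.
Qed.

Lemma controllable_trmx_eq0 n k p (A : 'M[R]_n) (B : 'M[R]_(n, k))
    (N : 'M[R]_(n, p)) :
  controllable A B -> (forall j, (cmx B)^T *m (cmx A)^T ^+ j *m cmx N = 0) -> N = 0.
Proof.
move=> cAB BAN0; apply: trmx_inj; rewrite trmx0; apply: (controllable_eq0 cAB) => j.
have := congr1 trmx (BAN0 j).
by rewrite cmx_tr trmx0 !trmx_mul trmxK trmx_expr trmxK mulmxA.
Qed.

Lemma tf_star_resolvent n m k (A : 'M[R]_n) (B : 'M[R]_(n, k))
    (C : 'M[R]_(m, n)) (D : 'M[R]_(m, k)) (z : R[i]) :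
  tf_star A B C D z =
    (cmx B)^T *m invmx (z^-1%:M - (cmx A)^T) *m (cmx C)^T + (cmx D)^T.
Proof.
by rewrite /tf_star /tf linearD /= !trmx_mul trmx_inv linearB /= tr_scalar_mx mulmxA.
Qed.

Lemma tf_star_mul_tf_stein n1 n2 m1 m2 k1 k2
  (A1 : 'M[R]_n1) (B1 : 'M[R]_(n1, k1)) (C1 : 'M[R]_(m1, n1)) (D1 : 'M[R]_(m1, k1))
  (A2 : 'M[R]_n2) (B2 : 'M[R]_(n2, k2)) (C2 : 'M[R]_(m2, n2)) (D2 : 'M[R]_(m2, k2))
  (M : 'M[R]_(m1, m2)) (Z : 'M[R]_(n1, n2)) (z : R[i]) :
  schur_stable A1 -> schur_stable A2 -> `|z| = 1 ->
  stein_map A1^T A2 Z = C1^T *m M *m C2 ->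
  tf_star A1 B1 C1 D1 z *m cmx M *m tf A2 B2 C2 D2 z =
    cmx (D1^T *m M *m D2 - B1^T *m Z *m B2)
    + (cmx B1)^T *m invmx (z^-1%:M - (cmx A1)^T) *m cmx (C1^T *m M *m D2 - A1^T *m Z *m B2)
    + cmx (D1^T *m M *m C2 - B1^T *m Z *m A2) *m invmx (z%:M - cmx A2) *m cmx B2.
Proof.
move=> /schur_stable_trmx sA1 sA2 z1 steinZ.
have z_neq0 : z != 0 by rewrite -normr_eq0 z1 oner_eq0.
have zV1 : `|z^-1| = 1 by rewrite normfV z1 invr1.
have uA1 : z^-1%:M - (cmx A1)^T \in unitmx.
  by rewrite -cmx_tr; apply: unitmx_sub_unit_circle.
have uA2 := unitmx_sub_unit_circle sA2 z1.
have := congr1 (@cmx R _ _) steinZ; rewrite cmx_stein_map !cmxM !cmx_tr => steinZc.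
rewrite tf_star_resolvent mulmxDl -(mulmxA _ _ (cmx M)).
rewrite (stein_product_resolvents (mulVf z_neq0) (invmx_sub_scalar_mulmx uA1)
  (mulmx_invmx_sub_scalar uA2) _ _ _ _ steinZc).
by rewrite !cmxB !cmxM !cmx_tr.
Qed.

End RealToComplex.

Theorem lemmaA2 (R : realType) (n1 n2 m1 m2 k1 k2 : nat)
  (A1 : 'M[R]_n1) (B1 : 'M[R]_(n1, k1)) (C1 : 'M[R]_(m1, n1)) (D1 : 'M[R]_(m1, k1))
  (A2 : 'M[R]_n2) (B2 : 'M[R]_(n2, k2)) (C2 : 'M[R]_(m2, n2)) (D2 : 'M[R]_(m2, k2))
  (M : 'M[R]_(m1, m2)) :
  schur_stable A1 -> schur_stable A2 ->
  (forall z : R[i], `|z| = 1 ->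
     tf_star A1 B1 C1 D1 z *m cmx M *m tf A2 B2 C2 D2 z = 0) ->
  controllable A1 B1 -> controllable A2 B2 ->
  exists Z12 : 'M[R]_(n1, n2),
    block_mx (A1^T *m Z12 *m A2 - Z12) (A1^T *m Z12 *m B2)
             (B1^T *m Z12 *m A2)       (B1^T *m Z12 *m B2)
    = (row_mx C1 D1)^T *m M *m row_mx C2 D2.
Proof.
move=> sA1 sA2 tf0 cA1 cA2.
have [Z steinZ] := stein_map_schur_surjective (schur_stable_trmx sA1) sA2 (C1^T *m M *m C2).
exists Z.
have circle0 z (z1 : `|z| = 1) :=
  etrans (esym (tf_star_mul_tf_stein B1 D1 B2 D2 sA1 sA2 z1 steinZ)) (tf0 z z1).
have [K0 N1_0 N2_0] := resolvent_sum_unit_circle_eq0 (spectrum_in_disc_trmx sA1) sA2 circle0.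
rewrite tr_row_mx mul_col_mx mul_col_row; congr block_mx => //; apply/esym/subr0_eq.
- exact: controllable_trmx_eq0 cA1 N1_0.
- exact: controllable_eq0 cA2 N2_0.
- by apply: cmx_inj; rewrite K0 cmx0.
Qed.
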